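(* Let $K,N,J\ge 1$ be integers with $N\le K$. Let $N_0>0$, and for $k=1,\dots,K$ let $h_k^{db}\in\mathbb{C}$ and $P_k'\ge 0$; set $\tilde N_k=N_0+|h_k^{db}|^2P_k'$ and $\bm{K}_{\tilde{\bm n}}=\mathrm{diag}\{\tilde N_1,\dots,\tilde N_K\}$. For $j=1,\dots,J$ let $h^{cb}_{j1},\dots,h^{cb}_{jK}\in\mathbb{C}\setminus\{0\}$ and $\bm H_j=\mathrm{diag}\{h^{cb}_{j1},\dots,h^{cb}_{jK}\}$; let $\bm M_{j1},\bm M_{j2}\in\mathbb{C}^{K\times N}$ and let $\bm A_{j1},\bm A_{j2}$ be $N\times N$ real diagonal matrices with nonnegative diagonal entries; set $$\bm K_{\bm x_j}=\bm M_{j1}\bm A_{j1}\bm M_{j1}^*+\bm M_{j2}\bm A_{j2}\bm M_{j2}^*,\qquad \bm H=(\bm H_1,\dots,\bm H_J),\qquad \bm K_{\bm x}=\mathrm{diag}\{\bm K_{\bm x_1},\dots,\bm K_{\bm x_J}\}$$ (block diagonal), and $\bm K_{\bm y}=\bm K_{\tilde{\bm n}}+\bm H\bm K_{\bm x}\bm H^*$. Define $$C_c=\log\det(\bm K_{\bm y})-\sum_{k=1}^K\log\tilde N_k,$$ and, writing $\lambda_K(\cdot)$ for the largest eigenvalue of a $K\times K$ Hermitian matrix, $$\tau_{K,j}=\lambda_K(\bm M_{j1}\bm A_{j1}\bm M_{j1}^* )+\lambda_K(\bm M_{j2}\bm A_{j2}\bm M_{j2}^* ).$$ Assume that $\bm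 K_{\tilde{\bm n}}$ and $\bm H\bm K_{\bm x}\bm H^*$ have no common eigenvector. Then $$C_c<\sum_{k=1}^{K}\log\left\{1+\frac{\sum_{j=1}^{J}\tau_{K,j}\cdot\max_{1\le k'\le K}|h^{cb}_{jk'}|^2}{N_0+|h_k^{db}|^2P_k'}\right\}.$$
   Context: This is the upper bound on the capacity of the cellular users in an uplink SCMA network coexisting with D2D pairs. The received signal is $\bm y=\sum_{j=1}^J\bm H_j\bm x_j+\tilde{\bm n}$, where $\bm x_j$ is the $K$-dimensional SCMA codeword of cellular user $j$ (zero-mean Gaussian with covariance $\bm K_{\bm x_j}$, obtained from an $N$-dimensional codeword via $\bm x_j=e^{i\theta_j}\bm V_j\bm M'\bm u_j$ with $\bm V_j\bm M'=(\bm M_{j1},\bm M_{j2})$ and $\bm u_j$ having covariance $\mathrm{diag}(\bm A_{j1},\bm A_{j2})$), and $\tilde{\bm n}\sim\mathcal{CN}(\bm 0,\bm K_{\tilde{\bm n}})$ is noise plus D2D interference; $C_c$ is the mutual information $I(\bm x;\bm y\mid\bm H)$ for Gaussian input. $\log$ denotes a logarithm to a fixed base greater than $1$. *)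

From HB Require Import structures.
From mathcomp Require Import all_boot all_order all_algebra.
From mathcomp Require Import complex.
From mathcomp Require Import classical_sets reals exp.
Set Implicit Arguments. Unset Strict Implicit. Unset Printing Implicit Defensive.
Import Order.TTheory GRing.Theory Num.Theory.
Local Open Scope ring_scope.
Local Open Scope classical_set_scope.

Section Defs.
Variable R : realType.
Local Notation C := (R[i]).

Definition rC (x : R) : C := Complex x 0.

Definition sqnorm (z : C) : R := (@complex.Re R z) ^+ 2 + (@complex.Im R z) ^+ 2.

Definition adj m n (A : 'M[C]_(m, n)) : 'M[C]_(n, m) := (map_mx (@conjc R) A)^T.

Definition logb (b x : R) : R := ln x / ln b.

(* largest eigenvalue of a (Hermitian) square matrix: supremum of its real eigenvalues
   (for a Hermitian matrix all eigenvalues are real, so this is lambda_K) *)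
Definition lambda_max n (A : 'M[C]_n) : R := sup [set x : R | eigenvalue A (rC x)].

Definition rdiag n (a : 'I_n -> R) : 'M[C]_n := diag_mx (\row_i rC (a i)).

Definition is_common_eigenvector n (A B : 'M[C]_n) (v : 'cV[C]_n) : Prop :=
  v != 0 /\ (exists a : C, A *m v = a *: v) /\ (exists b : C, B *m v = b *: v).

End Defs.

From HB Require Import structures.
From mathcomp Require Import all_boot all_order all_algebra.
From mathcomp Require Import complex.
From mathcomp Require Import classical_sets reals exp.
From mathcomp Require Import sesquilinear spectral.
Import Order.TTheory GRing.Theory Num.Theory.
Local Open Scope ring_scope.
Local Open Scope complex_scope.
Set Implicit Arguments. Unset Strict Implicit. Unset Printing Implicit Defensive.

(* The noise-plus-D2D covariance Kn is a positive diagonal matrix and the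
   interference H Kx H^* is a sum of Gram matrices, hence positive semidefinite,
   so Ky is Hermitian positive definite.  If Ky were diagonal, so would be the
   interference, and any basis vector would be a common eigenvector; hence Ky
   is not diagonal and the strict Hadamard inequality gives
   det Ky < prod_k (Ky)_kk.  Each (Ky)_kk equals Nt_k + sum_j |h_jk|^2 (Kxj)_kk,
   and a diagonal entry of a Hermitian matrix is a convex combination of its
   eigenvalues, so (Kxj)_kk <= tau_j.
   Strict Hadamard reduces, after rescaling to a unit diagonal, to strict
   AM-GM for the eigenvalues, whose sum is the trace. *)

Lemma delta_mx_neq0 (F : nzRingType) m n (i : 'I_m) (j : 'I_n) :
  delta_mx i j != 0 :> 'M[F]_(m, n).
Proof. by apply/eqP => /matrixP /(_ i j) /eqP; rewrite !mxE !eqxx oner_eq0. Qed.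

Section ComplexMatrices.
Variable R : realType.
Local Notation C := R[i].

Lemma adjE m n (A : 'M[C]_(m, n)) : adj A = (A ^t* )%sesqui.
Proof. by rewrite /adj map_trmx. Qed.

Lemma adjK m n (A : 'M[C]_(m, n)) : adj (adj A) = A.
Proof. by apply/matrixP => i j; rewrite !mxE conjcK. Qed.

Lemma adjD m n (A B : 'M[C]_(m, n)) : adj (A + B) = adj A + adj B.
Proof. by rewrite /adj map_mxD raddfD. Qed.

Lemma adj_sum m n (I : finType) (F : I -> 'M[C]_(m, n)) :
  adj (\sum_i F i) = \sum_i adj (F i).
Proof.
apply/matrixP => i j; rewrite !mxE !summxE rmorph_sum.
by apply: eq_bigr => k _; rewrite !mxE.
Qed.

Lemma adj_mul m n p (A : 'M[C]_(m, n)) (B : 'M[C]_(n, p)) :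
  adj (A *m B) = adj B *m adj A.
Proof. by rewrite /adj map_mxM trmx_mul. Qed.

Lemma adj_conj m n (X : 'M[C]_(m, n)) (A : 'M[C]_n) :
  adj (X *m A *m adj X) = X *m adj A *m adj X.
Proof. by rewrite !adj_mul adjK mulmxA. Qed.

Lemma adj_rdiag n (a : 'I_n -> R) : adj (rdiag a) = rdiag a.
Proof.
apply/matrixP => i j; rewrite !mxE eq_sym.
by case: eqP => [->|_]; rewrite ?conjc_real ?conjc0.
Qed.

Lemma det_rdiag n (a : 'I_n -> R) : \det (rdiag a) = (\prod_i a i)%:C.
Proof. by rewrite det_diag rmorph_prod; apply: eq_bigr => i _; rewrite mxE. Qed.

Lemma adj_delta n (k : 'I_n) : adj (delta_mx 0 k : 'rV[C]_n) = delta_mx k 0.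
Proof. by apply/matrixP => i j; rewrite !mxE andbC; case: (_ && _); rewrite ?conjc0 ?conjc1. Qed.

Lemma adj_mxrow J m (p_ : 'I_J -> nat) (D : forall j, 'M[C]_(m, p_ j)) :
  adj (\mxrow_j D j) = \mxcol_j adj (D j).
Proof.
rewrite /adj -tr_mxrow; congr trmx.
by apply/matrixP => i j; rewrite !mxE.
Qed.

End ComplexMatrices.

Section ComplexNumbers.
Variable R : realType.
Local Notation C := R[i].

Lemma sqnormE (z : C) : (sqnorm z)%:C = `|z| ^+ 2.
Proof. exact: add_Re2_Im2. Qed.

Lemma mulcJ_sqnorm (z : C) : z * conjc z = (sqnorm z)%:C.
Proof. by rewrite sqnormE normCK. Qed.

Lemma sqnorm_ge0 (z : C) : 0 <= sqnorm z.
Proof. by rewrite addr_ge0 ?sqr_ge0. Qed.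

Lemma sqnorm_gt0 (z : C) : (0 < sqnorm z) = (z != 0).
Proof. by rewrite -ltcR sqnormE -normrX normr_gt0 expf_eq0. Qed.

Lemma sqnormJ (z : C) : sqnorm (conjc z) = sqnorm z.
Proof. by case: z => a b; rewrite /sqnorm /= sqrrN. Qed.

Lemma real_ReE (z : C) : z \is Num.real -> (complex.Re z)%:C = z.
Proof.
by case: z => a b; rewrite realE !lecE /= [0 == b]eq_sym -andb_orr => /andP[/eqP -> _].
Qed.

Lemma ger0_ReE (z : C) : 0 <= z -> (complex.Re z)%:C = z.
Proof. by move/ger0_real/real_ReE. Qed.

Lemma ger0_Re (z : C) : 0 <= z -> 0 <= complex.Re z.
Proof. by move=> z_ge0; rewrite -lecR ger0_ReE. Qed.

Lemma gtr0_Re (z : C) : 0 < z -> 0 < complex.Re z.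
Proof. by move=> z_gt0; rewrite -ltcR ger0_ReE ?ltW. Qed.

Lemma Re_realM (x : R) (z : C) : complex.Re (x%:C * z) = x * complex.Re z.
Proof. by case: z => a b; rewrite /= mul0r subr0. Qed.

End ComplexNumbers.

Section QuadraticForm.
Variable R : realType.
Local Notation C := R[i].

Definition qform n (A : 'M[C]_n) (x : 'rV[C]_n) : C := (x *m A *m adj x) 0 0.

Definition psd n (A : 'M[C]_n) : Prop := forall x, 0 <= qform A x.

Definition posdef n (A : 'M[C]_n) : Prop := forall x, x != 0 -> 0 < qform A x.

Lemma qformD n (A B : 'M[C]_n) x : qform (A + B) x = qform A x + qform B x.
Proof. by rewrite /qform mulmxDr mulmxDl mxE. Qed.

Lemma qform_sum n (I : finType) (F : I -> 'M[C]_n) x :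
  qform (\sum_i F i) x = \sum_i qform (F i) x.
Proof. by rewrite /qform mulmx_sumr mulmx_suml summxE. Qed.

Lemma qform_conj m n (X : 'M[C]_(n, m)) (A : 'M[C]_m) x :
  qform (X *m A *m adj X) x = qform A (x *m X).
Proof. by rewrite /qform adj_mul !mulmxA. Qed.

Lemma qform_rdiag n (a : 'I_n -> R) x :
  qform (rdiag a) x = (\sum_i a i * sqnorm (x 0 i))%:C.
Proof.
rewrite /qform mul_mx_diag !mxE rmorph_sum; apply: eq_bigr => i _.
by rewrite !mxE rmorphM /= -mulcJ_sqnorm mulrCA mulrA.
Qed.

Lemma qform_delta n (A : 'M[C]_n) k : qform A (delta_mx 0 k) = A k k.
Proof. by rewrite /qform -rowE adj_delta -colE !mxE. Qed.

Lemma psdD n (A B : 'M[C]_n) : psd A -> psd B -> psd (A + B).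
Proof. by move=> A_psd B_psd x; rewrite qformD addr_ge0 ?A_psd ?B_psd. Qed.

Lemma psd_sum n (I : finType) (F : I -> 'M[C]_n) :
  (forall i, psd (F i)) -> psd (\sum_i F i).
Proof. by move=> F_psd x; rewrite qform_sum sumr_ge0 // => i _; apply: F_psd. Qed.

Lemma psd_conj m n (X : 'M[C]_(n, m)) (A : 'M[C]_m) :
  psd A -> psd (X *m A *m adj X).
Proof. by move=> A_psd x; rewrite qform_conj. Qed.

Lemma psd_rdiag n (a : 'I_n -> R) : (forall i, 0 <= a i) -> psd (rdiag a).
Proof.
move=> a_ge0 x; rewrite qform_rdiag lecR sumr_ge0 // => i _.
by rewrite mulr_ge0 ?sqnorm_ge0.
Qed.

Lemma posdef_rdiag n (a : 'I_n -> R) : (forall i, 0 < a i) -> posdef (rdiag a).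
Proof.
move=> a_gt0 x x_neq0; rewrite qform_rdiag ltcR.
have /existsP [i xi_neq0] : [exists i, x 0 i != 0].
  apply: contraNT x_neq0 => /existsPn x_eq0.
  by apply/eqP/rowP => i; rewrite mxE; apply/eqP; rewrite -[_ == 0]negbK x_eq0.
rewrite (bigD1 i) //= ltr_wpDr ?mulr_gt0 ?sqnorm_gt0 //.
by rewrite sumr_ge0 // => j _; rewrite mulr_ge0 ?sqnorm_ge0 ?ltW.
Qed.

Lemma posdefDr n (A B : 'M[C]_n) : posdef A -> psd B -> posdef (A + B).
Proof. by move=> A_pd B_psd x x_neq0; rewrite qformD ltr_wpDr ?A_pd. Qed.

Lemma posdef_conj_unit n (X A : 'M[C]_n) :
  posdef A -> X \in unitmx -> posdef (X *m A *m adj X).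
Proof.
move=> A_pd X_unit x x_neq0; rewrite qform_conj A_pd //.
by apply: contraNneq x_neq0 => xX_eq0; rewrite -[x](mulmxK X_unit) xX_eq0 mul0mx.
Qed.

Lemma psd_diag_ge0 n (A : 'M[C]_n) k : psd A -> 0 <= A k k.
Proof. by rewrite -qform_delta. Qed.

Lemma posdef_diag_gt0 n (A : 'M[C]_n) k : posdef A -> 0 < A k k.
Proof. by move=> A_pd; rewrite -qform_delta A_pd ?delta_mx_neq0. Qed.

End QuadraticForm.

Section HermitianSpectrum.
Variable R : realType.
Local Notation C := R[i].

(* The eigenvalues of [A] when [A] is Hermitian (its spectral diagonal is then real). *)
Definition eigval n (A : 'M[C]_n) (i : 'I_n) : R := complex.Re (spectral_diag A 0 i).

Variables (n : nat) (A : 'M[C]_n).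
Local Notation P := (spectralmx A).

Lemma spectral_mul_adj : P *m adj P = 1%:M.
Proof. by rewrite adjE; apply/unitarymxP/spectral_unitarymx. Qed.

Lemma spectral_adj_mul : adj P *m P = 1%:M.
Proof. by rewrite adjE -invmx_unitary ?spectral_unitarymx // mulVmx ?spectral_unit. Qed.

Hypothesis A_herm : adj A = A.

Let A_hermsym : A \is hermsymmx.
Proof. by apply/is_hermitianmxP; rewrite expr0 scale1r -adjE A_herm. Qed.

Lemma hermitian_spectralE : A = adj P *m rdiag (eigval A) *m P.
Proof.
have /orthomx_spectralP {1}-> := hermitian_normalmx A_hermsym.
rewrite invmx_unitary ?spectral_unitarymx // -adjE; congr (_ *m diag_mx _ *m _).
apply/rowP => i; rewrite !mxE; apply/esym/real_ReE.
exact: (mxOverP (hermitian_spectral_diag_real A_hermsym)).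
Qed.

Lemma det_hermitian : \det A = (\prod_i eigval A i)%:C.
Proof.
rewrite {1}hermitian_spectralE det_mulmx mulrC det_mulmx mulrA -det_mulmx.
by rewrite spectral_mul_adj det1 mul1r det_diag rmorph_prod; apply: eq_bigr => i _; rewrite mxE.
Qed.

Lemma trace_hermitian : \tr A = (\sum_i eigval A i)%:C.
Proof.
rewrite {1}hermitian_spectralE mxtrace_mulC mulmxA spectral_mul_adj mul1mx.
by rewrite mxtrace_diag rmorph_sum; apply: eq_bigr => i _; rewrite mxE.
Qed.

Lemma hermitian_diagE k : A k k = (\sum_i eigval A i * sqnorm (P i k))%:C.
Proof.
rewrite -qform_delta {1}hermitian_spectralE -{2}[P]adjK qform_conj qform_rdiag.
by congr (_%:C); apply: eq_bigr => i _; rewrite -rowE !mxE sqnormJ.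
Qed.

Lemma sum_sqnorm_spectral_col k : \sum_i sqnorm (P i k) = 1.
Proof.
apply: complexI; rewrite rmorph_sum rmorph1 /=.
have /matrixP /(_ k k) := spectral_adj_mul; rewrite !mxE eqxx mulr1n => <-.
by apply: eq_bigr => i _; rewrite !mxE mulrC mulcJ_sqnorm.
Qed.

Lemma spectral_mulmx : P *m A = rdiag (eigval A) *m P.
Proof.
transitivity (P *m (adj P *m rdiag (eigval A) *m P)); first by rewrite -hermitian_spectralE.
by rewrite !mulmxA spectral_mul_adj mul1mx.
Qed.

Lemma spectral_row_eigen i : row i P *m A = (eigval A i)%:C *: row i P.
Proof. by apply/rowP => j; rewrite -row_mul spectral_mulmx mul_diag_mx !mxE ?eqxx ?mulr1n. Qed.

Lemma spectral_row_neq0 i : row i P != 0.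
Proof.
apply/eqP => Pi0; have := row_mul i P (adj P).
rewrite spectral_mul_adj row1 Pi0 mul0mx; apply/eqP/delta_mx_neq0.
Qed.

Lemma mulmx_adj_spectral : A *m adj P = adj P *m rdiag (eigval A).
Proof.
transitivity (adj P *m rdiag (eigval A) *m P *m adj P); first by rewrite -hermitian_spectralE.
by rewrite -mulmxA spectral_mul_adj mulmx1.
Qed.

Lemma eigval_posdef_gt0 i : posdef A -> 0 < eigval A i.
Proof.
move=> A_pd; have := A_pd _ (spectral_row_neq0 i).
have Pi_norm : (row i P *m adj (row i P)) 0 0 = 1.
  have /matrixP /(_ i i) := spectral_mul_adj; rewrite !mxE eqxx mulr1n => <-.
  by apply: eq_bigr => k _; rewrite !mxE.
by rewrite /qform spectral_row_eigen -scalemxAl mxE Pi_norm mulr1 ltcR.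
Qed.

Lemma eigenvalue_hermitian z : eigenvalue A z -> exists i, z = (eigval A i)%:C.
Proof.
move=> /eigenvalueP [v vA v_neq0]; pose w := v *m adj P.
have wD : w *m rdiag (eigval A) = z *: w.
  by rewrite -mulmxA -mulmx_adj_spectral mulmxA vA -scalemxAl.
have /existsP [j wj_neq0] : [exists j, w 0 j != 0].
  apply: contraNT v_neq0 => /existsPn w_eq0.
  have -> : v = w *m P by rewrite -mulmxA spectral_adj_mul mulmx1.
  suff -> : w = 0 by rewrite mul0mx.
  by apply/rowP => j; move: (w_eq0 j); rewrite negbK => /eqP ->; rewrite mxE.
exists j; apply: (mulIf wj_neq0).
by have /rowP /(_ j) := wD; rewrite mul_mx_diag !mxE => <-; apply: mulrC.
Qed.

Lemma eigval_le_lambda_max i : eigval A i <= lambda_max A.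
Proof.
have [i0 _ i0_max] := @arg_maxP _ _ _ i xpredT (eigval A) isT.
apply: ub_le_sup.
  by exists (eigval A i0) => x /eigenvalue_hermitian [j /complexI ->]; apply: i0_max.
by rewrite /=; apply/eigenvalueP; exists (row i P); [apply: spectral_row_eigen | apply: spectral_row_neq0].
Qed.

Lemma diag_le_lambda_max k : complex.Re (A k k) <= lambda_max A.
Proof.
have [i0 _ i0_max] := @arg_maxP _ _ _ k xpredT (eigval A) isT.
apply: le_trans (eigval_le_lambda_max i0).
rewrite hermitian_diagE /= -[eigval A i0]mulr1 -(sum_sqnorm_spectral_col k) mulr_sumr.
by apply: ler_sum => i _; apply: ler_wpM2r; [apply: sqnorm_ge0 | apply: i0_max].
Qed.

End HermitianSpectrum.

Section Hadamard.
Variable R : realType.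
Local Notation C := R[i].

Lemma prod_lt1_AGM n (e : 'I_n -> R) :
  (forall i, 0 < e i) -> \sum_i e i = n%:R -> (exists i j, e i != e j) ->
  \prod_i e i < 1.
Proof.
move=> e_gt0 e_sum [i [j eij_neq]].
have n_neq0 : n%:R != 0 :> R by rewrite pnatr_eq0 -lt0n (leq_ltn_trans _ (ltn_ord i)).
have := @leif_AGM R _ predT e (fun i _ => ltW (e_gt0 i)).
rewrite card_ord !big_mkcond /= e_sum divff // expr1n => /lt_leif ->.
by apply/negP => /forallP /(_ i) /forallP /(_ j); rewrite (negbTE eij_neq).
Qed.

Lemma det_posdef_gt0 n (A : 'M[C]_n) :
  adj A = A -> posdef A -> 0 < complex.Re (\det A).
Proof.
move=> A_herm A_pd; rewrite det_hermitian //=.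
by apply: prodr_gt0 => i _; apply: eigval_posdef_gt0.
Qed.

Lemma det_lt1_unit_diag n (A : 'M[C]_n) : adj A = A -> posdef A ->
  (forall k, A k k = 1) -> ~~ is_diag_mx A -> complex.Re (\det A) < 1.
Proof.
move=> A_herm A_pd A_diag1 A_nondiag.
have e_sum : \sum_i eigval A i = n%:R.
  apply: complexI; rewrite -trace_hermitian // rmorph_nat /mxtrace.
  by rewrite (eq_bigr _ (fun k _ => A_diag1 k)) sumr_const card_ord.
rewrite det_hermitian //=; apply: prod_lt1_AGM => //.
  by move=> i; apply: eigval_posdef_gt0.
case: (boolP [exists i, exists j, eigval A i != eigval A j]).
  by move=> /existsP [i /existsP [j eij_neq]]; exists i, j.
move=> /existsPn all_eq; case/negP: A_nondiag.
have e1 i : eigval A i = 1.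
  have n_neq0 : n%:R != 0 :> R by rewrite pnatr_eq0 -lt0n (leq_ltn_trans _ (ltn_ord i)).
  apply: (mulIf n_neq0); rewrite mul1r -[in RHS]e_sum mulr_natr.
  rewrite (eq_bigr (fun=> eigval A i)) ?sumr_const ?card_ord // => j _.
  by move: (all_eq i) => /existsPn /(_ j) /negPn /eqP ->.
have -> : A = 1%:M.
  rewrite {1}(hermitian_spectralE A_herm).
  have -> : rdiag (eigval A) = 1%:M by apply/matrixP => i j; rewrite !mxE e1.
  by rewrite mulmx1 spectral_adj_mul.
exact: scalar_mx_is_diag.
Qed.

Lemma rdiag_conj_entry n (s : 'I_n -> R) (A : 'M[C]_n) k l :
  (rdiag s *m A *m rdiag s) k l = (s k)%:C * A k l * (s l)%:C.
Proof. by rewrite mul_mx_diag mxE mul_diag_mx !mxE. Qed.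

Lemma det_lt_prod_diag n (A : 'M[C]_n) : adj A = A -> posdef A -> ~~ is_diag_mx A ->
  complex.Re (\det A) < \prod_k complex.Re (A k k).
Proof.
move=> A_herm A_pd A_nondiag.
pose a k := complex.Re (A k k).
have a_gt0 k : 0 < a k by apply/gtr0_Re/posdef_diag_gt0.
have AkkE k : A k k = (a k)%:C by rewrite ger0_ReE // ltW // posdef_diag_gt0.
pose s k := (Num.sqrt (a k))^-1.
have s_gt0 k : 0 < s k by rewrite invr_gt0 sqrtr_gt0.
have sas k : s k * a k * s k = 1.
  by rewrite mulrAC -expr2 exprVn sqr_sqrtr ?ltW // mulVf // gt_eqF.
pose S := rdiag s; pose B := S *m A *m adj S.
have S_unit : S \in unitmx.
  by rewrite unitmxE unitfE det_rdiag fmorph_eq0 gt_eqF // prodr_gt0.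
have B_herm : adj B = B by rewrite adj_conj A_herm.
have BE k l : B k l = (s k)%:C * A k l * (s l)%:C by rewrite /B adj_rdiag rdiag_conj_entry.
have B_diag1 k : B k k = 1 by rewrite BE AkkE -!rmorphM sas rmorph1.
have B_nondiag : ~~ is_diag_mx B.
  apply: contra A_nondiag => /is_diag_mxP B_diag; apply/is_diag_mxP => k l kl.
  have /eqP := B_diag k l kl.
  by rewrite BE !mulf_eq0 !fmorph_eq0 !(gt_eqF (s_gt0 _)) orbF => /eqP.
have := det_lt1_unit_diag B_herm (posdef_conj_unit A_pd S_unit) B_diag1 B_nondiag.
pose p := \prod_k s k.
have pp_gt0 : 0 < p * p by rewrite mulr_gt0 // prodr_gt0.
have ppa : p * p * \prod_k a k = 1.
  by rewrite -!big_split big1 // => k _; rewrite /= mulrAC sas.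
rewrite /B adj_rdiag !det_mulmx det_rdiag mulrAC -rmorphM Re_realM -/p => ppD_lt1.
by rewrite -(ltr_pM2l pp_gt0) ppa.
Qed.

End Hadamard.

Section Logarithms.
Variable R : realType.

Lemma ln_prod (I : finType) (F : I -> R) : (forall i, 0 < F i) ->
  ln (\prod_i F i) = \sum_i ln (F i).
Proof.
move=> F_gt0.
suff [_ ->] : 0 < \prod_i F i /\ \sum_i ln (F i) = ln (\prod_i F i) by [].
elim/big_rec2: _ => [|i x y _ [y_gt0 ->]]; first by rewrite ln1.
by rewrite mulr_gt0 // lnM ?posrE.
Qed.

Lemma logb_sub_sum_lt (b D T : R) n (Nt d : 'I_n -> R) :
  1 < b -> 0 < D -> D < \prod_k d k ->
  (forall k, 0 < d k) -> (forall k, 0 < Nt k) -> (forall k, d k <= Nt k + T) ->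
  logb b D - \sum_k logb b (Nt k) < \sum_k logb b (1 + T / Nt k).
Proof.
move=> b_gt1 D_gt0 D_lt d_gt0 Nt_gt0 d_le.
rewrite /logb -!mulr_suml -mulrBl ltr_pM2r ?invr_gt0 ?ln_gt0 // ltrBlDl -big_split /=.
have NtTE k : Nt k + T = Nt k * (1 + T / Nt k).
  by rewrite mulrDr mulr1 mulrCA divff ?mulr1 // gt_eqF.
have NtT_gt0 k : 0 < 1 + T / Nt k.
  by rewrite -(pmulr_rgt0 _ (Nt_gt0 k)) -NtTE (lt_le_trans (d_gt0 k)).
apply: (@lt_le_trans _ _ (\sum_k ln (d k))).
  by rewrite -ln_prod // ltr_ln ?posrE // prodr_gt0.
apply: ler_sum => k _; rewrite -lnM ?posrE // -NtTE ler_ln ?posrE //.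
exact: lt_le_trans (d_le k).
Qed.

End Logarithms.

Lemma is_diag_mxDl (V : nmodType) n (A B : 'M[V]_n) :
  is_diag_mx A -> is_diag_mx (A + B) = is_diag_mx B.
Proof.
move=> /is_diag_mxP A_diag; apply/is_diag_mxP/is_diag_mxP => AB_diag i j ij.
  by have := AB_diag i j ij; rewrite mxE A_diag // add0r.
by rewrite mxE A_diag // AB_diag // addr0.
Qed.

Section UplinkChannel.
Variable R : realType.
Local Notation C := R[i].

Lemma mxrow_mxdiag_conj J m (p_ : 'I_J -> nat)
    (D : forall j, 'M[C]_(m, p_ j)) (X : forall j, 'M[C]_(p_ j)) :
  \mxrow_j D j *m \mxdiag_j X j *m adj (\mxrow_j D j) = \sum_j D j *m X j *m adj (D j).
Proof. by rewrite mul_mxrow_mxdiag adj_mxrow mul_mxrow_mxcol. Qed.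

Lemma adj_diag_mx n (r : 'rV[C]_n) : adj (diag_mx r) = diag_mx (map_mx conjc r).
Proof. by apply/matrixP => i j; rewrite !mxE rmorphMn eq_sym; case: eqP => [->|]. Qed.

Lemma diag_conj_entry n (r : 'rV[C]_n) (Z : 'M[C]_n) k :
  (diag_mx r *m Z *m adj (diag_mx r)) k k = (sqnorm (r 0 k))%:C * Z k k.
Proof. by rewrite adj_diag_mx mul_mx_diag mul_diag_mx !mxE -mulcJ_sqnorm mulrAC. Qed.

Lemma Re_diag_conj_le n (h : 'I_n -> C) (Z : 'M[C]_n) k t :
  psd Z -> complex.Re (Z k k) <= t ->
  complex.Re ((diag_mx (\row_k h k) *m Z *m adj (diag_mx (\row_k h k))) k k)
    <= t * \big[Num.max/0]_k' sqnorm (h k').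
Proof.
move=> Z_psd Zkk_le; rewrite diag_conj_entry mxE Re_realM mulrC.
apply: ler_pM => //; [exact/ger0_Re/psd_diag_ge0 | exact: sqnorm_ge0 | exact: le_bigmax].
Qed.

Lemma common_eigenvector_diag n (A B : 'M[C]_n) : (0 < n)%N ->
  is_diag_mx A -> is_diag_mx B -> exists v, is_common_eigenvector A B v.
Proof.
move=> n_gt0 /diag_mxP [a ->] /diag_mxP [b ->]; pose k : 'I_n := Ordinal n_gt0.
exists (delta_mx k 0); split; first exact: delta_mx_neq0.
by split; [exists (a 0 k) | exists (b 0 k)]; apply/matrixP => i j;
  rewrite mul_diag_mx !mxE; case: eqP => [->|]; rewrite ?mulr0.
Qed.

End UplinkChannel.

Unset Implicit Arguments.

Theorem mainTheorem1 (R : realType) (b : R) (hb : 1 < b)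
  (K N J : nat) (hK : (0 < K)%N) (hN : (0 < N)%N) (hNK : (N <= K)%N) (hJ : (0 < J)%N)
  (N0 : R) (hN0 : 0 < N0) (hdb : 'I_K -> R[i]) (P : 'I_K -> R) (hP : forall k, 0 <= P k)
  (hcb : 'I_J -> 'I_K -> R[i]) (hcb0 : forall j k, hcb j k != 0)
  (M1 M2 : 'I_J -> 'M[R[i]]_(K, N)) (a1 a2 : 'I_J -> 'I_N -> R)
  (ha1 : forall j i, 0 <= a1 j i) (ha2 : forall j i, 0 <= a2 j i) :
  let Nt := fun k : 'I_K => N0 + sqnorm (hdb k) * P k in
  let Kn : 'M[R[i]]_K := rdiag Nt in
  let Hj := fun j : 'I_J => (diag_mx (\row_k hcb j k) : 'M[R[i]]_K) in
  let Kxj := fun j : 'I_J =>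
    M1 j *m rdiag (a1 j) *m adj (M1 j) + M2 j *m rdiag (a2 j) *m adj (M2 j) in
  let H : 'M[R[i]]_(K, \sum_(j < J) K) := \mxrow_(j < J) Hj j in
  let Kx : 'M[R[i]]_(\sum_(j < J) K) := \mxdiag_(j < J) Kxj j in
  let Ky := Kn + H *m Kx *m adj H in
  let Cc := logb b (complex.Re (\det Ky)) - \sum_(k < K) logb b (Nt k) in
  let tau := fun j : 'I_J =>
    lambda_max (M1 j *m rdiag (a1 j) *m adj (M1 j))
    + lambda_max (M2 j *m rdiag (a2 j) *m adj (M2 j)) in
  ~ (exists v : 'cV[R[i]]_K, is_common_eigenvector Kn (H *m Kx *m adj H) v) ->
  Cc < \sum_(k < K) logb b (1 + (\sum_(j < J) tau j * \big[Num.max/0]_(k' < K) sqnorm (hcb j k'))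
                                / Nt k).
Proof.
move=> Nt Kn Hj Kxj H Kx Ky Cc tau no_common.
have Nt_gt0 k : 0 < Nt k by rewrite (lt_le_trans hN0) // lerDl mulr_ge0 ?sqnorm_ge0.
have gram_herm m (X : 'M[R[i]]_(K, m)) a : adj (X *m rdiag a *m adj X) = X *m rdiag a *m adj X.
  by rewrite adj_conj adj_rdiag.
have GE : H *m Kx *m adj H = \sum_j Hj j *m Kxj j *m adj (Hj j) := mxrow_mxdiag_conj _ _.
have G_herm : adj (H *m Kx *m adj H) = H *m Kx *m adj H.
  by rewrite GE adj_sum; apply: eq_bigr => j _; rewrite adj_conj adjD !gram_herm.
have G_psd : psd (H *m Kx *m adj H).
  by rewrite GE; apply: psd_sum => j; apply/psd_conj/psdD; apply/psd_conj/psd_rdiag.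
have Ky_herm : adj Ky = Ky by rewrite adjD adj_rdiag G_herm.
have Ky_pd : posdef Ky := posdefDr (posdef_rdiag Nt_gt0) G_psd.
have Ky_nondiag : ~~ is_diag_mx Ky.
  apply/negP => Ky_diag; apply: no_common; apply: common_eigenvector_diag hK _ _.
    exact: diag_mx_is_diag.
  by rewrite -(is_diag_mxDl _ (diag_mx_is_diag (\row_k rC (Nt k)))).
have Ky_diag_gt0 k : 0 < complex.Re (Ky k k) by apply/gtr0_Re/posdef_diag_gt0.
apply: logb_sub_sum_lt hb (det_posdef_gt0 Ky_herm Ky_pd)
  (det_lt_prod_diag Ky_herm Ky_pd Ky_nondiag) Ky_diag_gt0 Nt_gt0 _ => k.
rewrite mxE raddfD [Kn k k]mxE eqxx mulr1n [X in complex.Re X + _]mxE lerD2l.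
rewrite GE summxE raddf_sum.
apply: ler_sum => j _; apply: Re_diag_conj_le.
  by apply: psdD; apply/psd_conj/psd_rdiag.
by rewrite mxE raddfD lerD // diag_le_lambda_max // gram_herm.
Qed.
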